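(* Consider a Functional DCOP (as defined in the context) in which every utility function is binary and differentiable. Suppose discrete DPOP is applied to it after discretizing the domains so that, for every utility function $f(x_i, x_{i_1}, \dots, x_{i_k})$ handled by an agent $x_i$ with separator agents $x_{i_1},\dots,x_{i_k}$, the domain of $f$ is partitioned into hypercubes of size $m$ (i.e., the distance between two neighbouring discrete points of the same variable is $m$). Assume that $|\nabla f(v)| \le \delta$ for every utility function $f$ of the problem and every point $v$ of its domain, where for $v=(v_i,v_{i_1},\dots,v_{i_k})$, $$|\nabla f(v)| = \left|\frac{\partial f}{\partial x_i}(v)\right| + \left|\frac{\partial f}{\partial x_{i_1}}(v)\right| + \dots + \left|\frac{\partial f}{\partial x_{i_k}}(v)\right|.$$ Then the error bound of discrete DPOP is $|\mathbf{F}|\, m\, \delta$; that is, the utility $\mathbf{F}$ of the complete solution returned by discrete DPOP is at least $\max_{\mathbf{x}} \mathbf{F}(\mathbf{x}) - |\mathbf{F}|\, m\,\delta$, where $|\mathbf{F}|$ is the number of utility functions.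
   Context: A Functional DCOP (F-DCOP) is a tuple $\langle \mathbf{A}, \mathbf{X}, \mathbf{D}, \mathbf{F}, \alpha\rangle$: $\mathbf{A}$ is a finite set of agents; $\mathbf{X}=\{x_1,\dots,x_n\}$ is a set of continuous decision variables; $\mathbf{D}=\{D_x\}$ where each $x$ takes values in an interval $D_x=[LB_x,UB_x]$; $\mathbf{F}=\{f_1,\dots,f_m\}$ is a set of utility functions, each $f$ defined on $\prod_{x\in \mathrm{scope}(f)} D_x$ with values in $\mathbb{R}\cup\{-\infty\}$; $\alpha:\mathbf{X}\to\mathbf{A}$ maps variables to agents. Each agent controls exactly one variable (agents and variables are identified) and every utility function is binary. The utility of a complete assignment $\mathbf{x}$ is $\mathbf{F}(\mathbf{x})=\sum_{f\in\mathbf{F}} f(\mathbf{x})$, and the goal is to find $\mathbf{x}^*=\arg\max_{\mathbf{x}}\mathbf{F}(\mathbf{x})$. The constraint graph has a node per variable and an edge between two variables sharing a utility function. A pseudo-tree is a rooted spanning tree of the constraint graph (tree edges) such that the two variables of every utility function lie on the same root-to-leaf branch; remaining edges are backedges. The separator of $x_i$ consists of the ancestors of $x_i$ that are connected to $x_i$ or to one of its descendants. Discrete DPOP: after building a pseudo-tree, each variable's domain is replaced by a finite set of discrete points. In the UTIL phase, starting from the leaves, each agent adds the utilities of its functions with its separator and the UTIL tables received from its children, for every combination of discrete values of itself and its separator, then projects out its own variable by maximizing over it, and sends the resulting table (a function of its separator's values) to its parent. In the VALUE phase, starting from the root, each agent picks its best value given the values of its separator and sends the values down to its children. *)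

From Stdlib Require Import Reals.
From Coquelicot Require Import Coquelicot.
From mathcomp Require Import all_boot.

Set Implicit Arguments.
Unset Strict Implicit.
Unset Printing Implicit Defensive.

Local Open Scope R_scope.

(* Variables are 'I_n, utility functions are indexed by 'I_p.
   Function j is binary with scope (s1 j, s2 j) and value F j (x_{s1 j}) (x_{s2 j}). *)

Definition Rsum (l : seq R) : R := foldr Rplus 0 l.

Definition Rmaxl (l : seq R) : R :=
  match l with [::] => 0 | x :: t => foldr Rmax x t end.

Definition upd (n : nat) (a : 'I_n -> R) (i : 'I_n) (d : R) : 'I_n -> R :=
  fun j => if j == i then d else a j.

Fixpoint iter_par (n : nat) (par : 'I_n -> option 'I_n) (k : nat) (v : 'I_n)
  : option 'I_n :=
  match k with
  | 0 => Some v
  | k'.+1 => match iter_par par k' v with Some u => par u | None => None end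
  end.

Definition is_anc (n : nat) (par : 'I_n -> option 'I_n) (u v : 'I_n) : bool :=
  has (fun k => iter_par par k v == Some u) (iota 1 n).

(* par (the parent map) describes a pseudo-tree of the constraint graph:
   a rooted tree (acyclic, single root) whose edges are edges of the
   constraint graph, and such that the two variables of every utility
   function lie on the same root-to-leaf branch. *)
Definition is_pseudo_tree (n p : nat) (s1 s2 : 'I_p -> 'I_n)
  (par : 'I_n -> option 'I_n) : Prop :=
  (forall i, ~~ is_anc par i i) /\
  (exists r, par r = None /\ forall i, par i = None -> i = r) /\
  (forall c i, par c = Some i ->
     exists j, ((s1 j == i) && (s2 j == c)) || ((s1 j == c) && (s2 j == i))) /\
  (forall j, is_anc par (s1 j) (s2 j) || is_anc par (s2 j) (s1 j)).

Definition handler (n p : nat) (par : 'I_n -> option 'I_n) (s1 s2 : 'I_p -> 'I_n)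
  (j : 'I_p) : 'I_n :=
  if is_anc par (s1 j) (s2 j) then s2 j else s1 j.

Definition grid (n : nat) (LB : 'I_n -> R) (K : 'I_n -> nat) (m : R) (i : 'I_n)
  : seq R :=
  [seq LB i + INR k * m | k <- iota 0 (K i).+1].

Definition local (n p : nat) (F : 'I_p -> R -> R -> R) (s1 s2 : 'I_p -> 'I_n)
  (par : 'I_n -> option 'I_n) (i : 'I_n) (a : 'I_n -> R) : R :=
  Rsum [seq F j (a (s1 j)) (a (s2 j)) | j <- enum 'I_p & handler par s1 s2 j == i].

(* UTIL phase: util k i a is the UTIL message sent by agent i to its parent,
   evaluated at the separator values read from a (k is a recursion budget,
   which is sufficient as soon as it exceeds the height of the subtree of i). *)
Fixpoint util (n p : nat) (F : 'I_p -> R -> R -> R) (s1 s2 : 'I_p -> 'I_n)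
  (par : 'I_n -> option 'I_n) (dom : 'I_n -> seq R) (k : nat) (i : 'I_n)
  (a : 'I_n -> R) : R :=
  match k with
  | 0 => 0
  | k'.+1 =>
      Rmaxl [seq local F s1 s2 par i (upd a i d)
                 + Rsum [seq util F s1 s2 par dom k' c (upd a i d)
                        | c <- enum 'I_n & par c == Some i]
            | d <- dom i]
  end.

Definition agent_val (n p : nat) (F : 'I_p -> R -> R -> R) (s1 s2 : 'I_p -> 'I_n)
  (par : 'I_n -> option 'I_n) (dom : 'I_n -> seq R) (i : 'I_n) (a : 'I_n -> R)
  (d : R) : R :=
  local F s1 s2 par i (upd a i d)
  + Rsum [seq util F s1 s2 par dom n c (upd a i d) | c <- enum 'I_n & par c == Some i].

(* VALUE phase: xh is a complete solution returned by discrete DPOP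
   (for some tie-breaking): every agent takes a discrete value that is best
   given the values chosen by its ancestors. *)
Definition dpop_solution (n p : nat) (F : 'I_p -> R -> R -> R) (s1 s2 : 'I_p -> 'I_n)
  (par : 'I_n -> option 'I_n) (dom : 'I_n -> seq R) (xh : 'I_n -> R) : Prop :=
  forall i, List.In (xh i) (dom i) /\
    agent_val F s1 s2 par dom i xh (xh i)
    = Rmaxl [seq agent_val F s1 s2 par dom i xh d | d <- dom i].

Definition Ftot (n p : nat) (F : 'I_p -> R -> R -> R) (s1 s2 : 'I_p -> 'I_n)
  (x : 'I_n -> R) : R :=
  Rsum [seq F j (x (s1 j)) (x (s2 j)) | j <- enum 'I_p].

From Stdlib Require Import Reals Lra FunctionalExtensionality.
From Coquelicot Require Import Coquelicot.
From HB Require Import structures.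
From mathcomp Require Import all_boot.
Set Implicit Arguments.
Unset Strict Implicit.
Unset Printing Implicit Defensive.
Local Open Scope R_scope.

(* Discrete DPOP is exact on the grid: summed over all agents, the VALUE-phase
   equalities telescope (each UTIL message is counted once in the choice of the
   parent and once as the maximum computed by the child), so the utility of the
   returned solution equals the UTIL value of the root, which bounds the utility
   of every grid assignment.  Rounding an arbitrary assignment down to the grid
   moves each coordinate by at most m, and by the mean value theorem along a
   segment each of the |F| utility functions then loses at most m delta. *)

Lemma RplusA : associative Rplus.
Proof. by move=> x y z; rewrite Rplus_assoc. Qed.

HB.instance Definition _ :=
  Monoid.isComLaw.Build R 0 Rplus RplusA Rplus_comm Rplus_0_l.

Lemma Rsum_enum_cond (T : finType) (P : pred T) (f : T -> R) :
  Rsum [seq f j | j <- enum T & P j] = \big[Rplus/0]_(j | P j) f j.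
Proof. by rewrite /Rsum foldrE big_map big_filter big_enum_cond. Qed.

Lemma Rsum_enum (T : finType) (f : T -> R) :
  Rsum [seq f j | j <- enum T] = \big[Rplus/0]_j f j.
Proof. by rewrite /Rsum foldrE big_map big_enum. Qed.

Lemma big_Rle (T : finType) (P : pred T) (f g : T -> R) :
  (forall j, P j -> f j <= g j) ->
  \big[Rplus/0]_(j | P j) f j <= \big[Rplus/0]_(j | P j) g j.
Proof. by move=> le_fg; apply: (big_ind2 Rle) => //; [lra | move=> *; lra]. Qed.

Lemma big_const_Rplus (p : nat) (c : R) : \big[Rplus/0]_(j < p) c = INR p * c.
Proof.
rewrite big_const_ord; elim: p => [|p IH]; first by rewrite /= Rmult_0_l.
by rewrite iterS IH S_INR; ring.
Qed.

Lemma Rmaxl_ub (l : seq R) (x : R) : List.In x l -> x <= Rmaxl l.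
Proof.
case: l => [//|y t] /=.
have le_foldr z : z <= foldr Rmax z t.
  elim: t => [|w t IH] /=; [lra | exact: Rle_trans IH (Rmax_r _ _)].
case=> [<-|]; first exact: le_foldr.
elim: t {le_foldr} => [//|w t IH] /= [<-|in_t].
  exact: Rmax_l.
exact: Rle_trans (IH in_t) (Rmax_r _ _).
Qed.

Lemma upd_id (n : nat) (a : 'I_n -> R) (i : 'I_n) : upd a i (a i) = a.
Proof. by apply: functional_extensionality => j; rewrite /upd; case: eqP => [->|]. Qed.

Section PseudoTree.
Variables (n : nat) (par : 'I_n -> option 'I_n).

Lemma iter_parS k v : iter_par par k.+1 v = obind par (iter_par par k v).
Proof. by rewrite /=; case: iter_par. Qed.

Lemma iter_par_add j k v w :
  iter_par par j v = Some w -> iter_par par (j + k) v = iter_par par k w.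
Proof.
by move=> jv; elim: k => [|k IH]; rewrite ?addn0 // addnS !iter_parS IH.
Qed.

Lemma iter_par_none_le j k v :
  (j <= k)%N -> iter_par par j v = None -> iter_par par k v = None.
Proof.
move=> /subnKC <- jv; elim: (k - j)%N => [|d IH]; first by rewrite addn0.
by rewrite addnS iter_parS IH.
Qed.

Lemma is_anc_parent u c i :
  par c = Some i -> is_anc par u c -> u = i \/ is_anc par u i.
Proof.
move=> ci /hasP [[|k]]; rewrite mem_iota // add1n ltnS => /andP [_ le_kn].
rewrite -add1n (@iter_par_add 1 k c i) /= ?ci //.
case: k le_kn => [_ /eqP [] | k le_kn uk]; [by left | right].
by apply/hasP; exists k.+1; rewrite // mem_iota add1n ltnS (ltnW le_kn).
Qed.

Lemma not_is_anc_root r u : par r = None -> ~~ is_anc par u r.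
Proof.
move=> root_r; apply/hasPn => -[|k]; rewrite mem_iota // => _.
by rewrite (@iter_par_none_le 1 k.+1) //= root_r.
Qed.

Hypothesis par_acyclic : forall i, ~~ is_anc par i i.

(* Pigeonhole: n + 1 iterates in 'I_n must repeat, which would make a vertex its own ancestor. *)
Lemma acyclic_iter_par_card v : iter_par par n v = None.
Proof.
case En: (iter_par par n v) => [w|] //; exfalso.
pose f (j : 'I_n.+1) := odflt w (iter_par par j v).
have f_iter (j : 'I_n.+1) : iter_par par j v = Some (f j).
  rewrite /f; case Ej: iter_par => [u|] //=.
  by rewrite (iter_par_none_le (ltnSE (ltn_ord j)) Ej) in En.
have /injectivePn [a [b neq_ab fab]] : ~~ injectiveb f.
  by apply/injectiveP => /leq_card; rewrite !card_ord ltnn.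
wlog lt_ab : a b neq_ab fab / (a < b)%N.
  move=> wlog_ab; case: (ltngtP a b) => [|lt_ba|/val_inj eq_ab]; first exact: wlog_ab.
    by apply: (wlog_ab b a); rewrite // eq_sym.
  by rewrite eq_ab eqxx in neq_ab.
apply: (negP (par_acyclic (f a))); apply/hasP; exists (b - a)%N.
  rewrite mem_iota subn_gt0 lt_ab add1n ltnS /=.
  exact: leq_trans (leq_subr _ _) (ltnSE (ltn_ord b)).
by rewrite -(iter_par_add _ (f_iter a)) subnKC ?(ltnW lt_ab) // f_iter fab.
Qed.

Fixpoint height_lt (k : nat) (i : 'I_n) : Prop :=
  if k is k'.+1 then forall c, par c = Some i -> height_lt k' c else False.

Lemma height_lt_no_iter k i :
  (forall v, iter_par par k v <> Some i) -> height_lt k i.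
Proof.
elim: k i => [|k IH] i no_iter /=; first exact: no_iter i erefl.
by move=> c ci; apply: IH => v kv; apply: (no_iter v); rewrite iter_parS kv.
Qed.

Lemma acyclic_height_lt_card i : height_lt n i.
Proof. by apply: height_lt_no_iter => v; rewrite acyclic_iter_par_card. Qed.

End PseudoTree.

Section DiscreteDPOP.
Variables (n p : nat) (F : 'I_p -> R -> R -> R) (s1 s2 : 'I_p -> 'I_n)
  (par : 'I_n -> option 'I_n) (dom : 'I_n -> seq R).

Local Notation util := (util F s1 s2 par dom).
Local Notation local := (local F s1 s2 par).
Local Notation agent_val := (agent_val F s1 s2 par dom).
Local Notation handler := (handler par s1 s2).
Local Notation Ftot := (Ftot F s1 s2).

Lemma util_stable k i a : height_lt par k i -> util k i a = util k.+1 i a.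
Proof.
elim: k i a => [//|k IH] i a /= hk.
congr Rmaxl; apply: eq_map => d; congr (_ + Rsum _).
by apply/eq_in_map => c; rewrite mem_filter => /andP [/eqP /hk /IH ->].
Qed.

Lemma sum_local a : \big[Rplus/0]_i local i a = Ftot a.
Proof.
rewrite /Ftot Rsum_enum; under eq_bigr do rewrite /local Rsum_enum_cond.
rewrite (exchange_big_dep xpredT) //=; apply: eq_bigr => j _.
by rewrite (big_pred1 (handler j)) // => i; rewrite /= eq_sym.
Qed.

Lemma sum_children (g : 'I_n -> R) :
  \big[Rplus/0]_i \big[Rplus/0]_(c | par c == Some i) g c =
  \big[Rplus/0]_(c | par c != None) g c.
Proof.
rewrite (exchange_big_dep xpredT) //= [RHS]big_mkcond; apply: eq_bigr => c _.
by case: (par c) => [i|] /=; [rewrite (big_pred1 i) | rewrite big_pred0].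
Qed.

(* [util n.+1 i a] unfolds to the maximum of [agent_val i a] over [dom i]. *)
Lemma agent_val_le_util i a d : List.In d (dom i) -> agent_val i a d <= util n.+1 i a.
Proof. by move=> dom_d; apply: Rmaxl_ub; apply: List.in_map. Qed.

Hypothesis par_acyclic : forall i, ~~ is_anc par i i.

(* The pseudo-tree has height at most n, so the recursion budget n is never exhausted. *)
Lemma util_card_stable i a : util n i a = util n.+1 i a.
Proof. exact/util_stable/acyclic_height_lt_card. Qed.

Lemma sum_agent_val a :
  \big[Rplus/0]_i agent_val i a (a i) =
  Ftot a + \big[Rplus/0]_(c | par c != None) util n c a.
Proof.
rewrite -sum_local -sum_children -big_split; apply: eq_bigr => i _.
by rewrite /agent_val upd_id Rsum_enum_cond.
Qed.

Hypothesis scope_on_branch :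
  forall j, is_anc par (s1 j) (s2 j) || is_anc par (s2 j) (s1 j).

Lemma handler_scope j i : handler j = i ->
  (s1 j = i \/ is_anc par (s1 j) i) /\ (s2 j = i \/ is_anc par (s2 j) i).
Proof.
rewrite /handler => <-; case: ifP => [|not_12]; first by split; [right | left].
by split; [left | right; move: (scope_on_branch j); rewrite not_12].
Qed.

Lemma util_ancestors k i a b :
  (forall u, is_anc par u i -> a u = b u) -> util k i a = util k i b.
Proof.
elim: k i a b => [//|k IH] i a b eq_ab /=; congr Rmaxl; apply: eq_map => d.
have eq_upd v : v = i \/ is_anc par v i -> upd a i d v = upd b i d v.
  by rewrite /upd; case: eqP => // _ [//|/eq_ab].
congr (Rsum _ + Rsum _); apply/eq_in_map.
  move=> j; rewrite mem_filter => /andP [/eqP /handler_scope [s1j s2j] _].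
  by rewrite (eq_upd _ s1j) (eq_upd _ s2j).
move=> c; rewrite mem_filter => /andP [/eqP ci _].
by apply: IH => u /(is_anc_parent ci) /eq_upd.
Qed.

Variable r : 'I_n.
Hypotheses (par_r : par r = None) (root_unique : forall i, par i = None -> i = r).

Lemma sum_util_root a :
  \big[Rplus/0]_i util n.+1 i a =
  util n.+1 r a + \big[Rplus/0]_(c | par c != None) util n c a.
Proof.
have is_root c : (par c == None) = (c == r).
  by apply/eqP/eqP => [/root_unique | ->].
rewrite (bigD1 r) //=; congr (_ + _); apply: eq_big => [c | c _].
  by rewrite -is_root.
by rewrite util_card_stable.
Qed.

Lemma Ftot_le_util_root y :
  (forall i, List.In (y i) (dom i)) -> Ftot y <= util n.+1 r y.
Proof.
move=> y_dom; have : \big[Rplus/0]_i agent_val i y (y i) <= \big[Rplus/0]_i util n.+1 i y.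
  by apply: big_Rle => i _; apply: agent_val_le_util.
by rewrite sum_agent_val sum_util_root; lra.
Qed.

Lemma Ftot_dpop_solution xh :
  dpop_solution F s1 s2 par dom xh -> Ftot xh = util n.+1 r xh.
Proof.
move=> sol; have : \big[Rplus/0]_i agent_val i xh (xh i) = \big[Rplus/0]_i util n.+1 i xh.
  by apply: eq_bigr => i _; case: (sol i) => _ ->.
by rewrite sum_agent_val sum_util_root; lra.
Qed.

(* The root's UTIL value ignores its argument, so it is the same for xh and y. *)
Lemma dpop_solution_optimal_on_dom xh y :
  dpop_solution F s1 s2 par dom xh -> (forall i, List.In (y i) (dom i)) ->
  Ftot y <= Ftot xh.
Proof.
move=> sol y_dom; rewrite (Ftot_dpop_solution sol) -(@util_ancestors _ _ y).
  exact: Ftot_le_util_root.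
by move=> u; rewrite (negbTE (not_is_anc_root u par_r)).
Qed.

End DiscreteDPOP.

Lemma pseudo_tree_dpop_optimal n p (F : 'I_p -> R -> R -> R) (s1 s2 : 'I_p -> 'I_n)
  par dom xh y :
  is_pseudo_tree s1 s2 par -> dpop_solution F s1 s2 par dom xh ->
  (forall i, List.In (y i) (dom i)) -> Ftot F s1 s2 y <= Ftot F s1 s2 xh.
Proof.
move=> [acyclic [[r [par_r root_unique]] [_ on_branch]]].
exact: (dpop_solution_optimal_on_dom acyclic on_branch par_r root_unique).
Qed.

Lemma grid_floor (m t : R) (K : nat) : 0 < m -> 0 <= t <= INR K * m ->
  exists k, (k <= K)%N /\ INR k * m <= t <= INR k * m + m.
Proof.
move=> m_gt0; elim: K => [|K IH] t_range.
  by exists 0%N; split => //; rewrite /= in t_range *; lra.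
have [t_le|t_gt] := Rle_lt_dec t (INR K * m).
  have [k [le_kK k_floor]] := IH (conj (proj1 t_range) t_le).
  by exists k; split => //; apply: leqW.
by exists K; split => //; rewrite S_INR in t_range; lra.
Qed.

Lemma grid_neighbour n (LB : 'I_n -> R) (K : 'I_n -> nat) (m : R) (x : 'I_n -> R) :
  0 < m -> (forall i, LB i <= x i <= LB i + INR (K i) * m) ->
  exists y, forall i, [/\ List.In (y i) (grid LB K m i),
                          LB i <= y i <= LB i + INR (K i) * m & Rabs (x i - y i) <= m].
Proof.
move=> m_gt0 x_box.
have /fin_all_exists [k k_floor] i :
    exists k, (k <= K i)%N /\ INR k * m <= x i - LB i <= INR k * m + m.
  by apply: grid_floor => //; have := x_box i; lra.
exists (fun i => LB i + INR (k i) * m) => i; have [le_kK floor] := k_floor i; split.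
- apply (List.in_map (fun k => LB i + INR k * m)).
  by apply/Iter.In_mem; rewrite mem_iota ltnS.
- by have := pos_INR (k i); have := le_INR _ _ (elimT leP le_kK); nra.
- by apply: Rabs_le; lra.
Qed.

Lemma derivable_pt_lim_affine (c d t : R) : derivable_pt_lim (fun t => c + t * d) t d.
Proof. by apply/is_derive_Reals; auto_derive => //; ring. Qed.

Lemma mul_le_abs_mul (l d m : R) : Rabs d <= m -> l * d <= Rabs l * m.
Proof.
move=> le_dm; apply: Rle_trans (Rle_abs _) _; rewrite Rabs_mult.
by apply: Rmult_le_compat_l => //; apply: Rabs_pos.
Qed.

(* Mean value theorem along the segment from (y1, y2) to (x1, x2). *)
Lemma sub_le_of_grad_bound (f : R -> R -> R) (a1 b1 a2 b2 delta m x1 x2 y1 y2 : R) :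
  (forall u v, a1 <= u <= b1 -> a2 <= v <= b2 ->
     exists lu lv, differentiable_pt_lim f u v lu lv /\ Rabs lu + Rabs lv <= delta) ->
  a1 <= x1 <= b1 -> a2 <= x2 <= b2 -> a1 <= y1 <= b1 -> a2 <= y2 <= b2 ->
  Rabs (x1 - y1) <= m -> Rabs (x2 - y2) <= m ->
  f x1 x2 - f y1 y2 <= delta * m.
Proof.
move=> grad_bound x1_ab x2_ab y1_ab y2_ab d1_m d2_m.
pose g t := f (y1 + t * (x1 - y1)) (y2 + t * (x2 - y2)).
have g_der t : 0 <= t <= 1 -> exists2 L, derivable_pt_lim g t L & L <= delta * m.
  move=> t01.
  have u_ab : a1 <= y1 + t * (x1 - y1) <= b1 by nra.
  have v_ab : a2 <= y2 + t * (x2 - y2) <= b2 by nra.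
  have [lu [lv [f_diff lu_lv]]] := grad_bound _ _ u_ab v_ab.
  exists (lu * (x1 - y1) + lv * (x2 - y2)).
    by apply: derivable_pt_lim_comp_2d => //; apply: derivable_pt_lim_affine.
  have := mul_le_abs_mul lu d1_m; have := mul_le_abs_mul lv d2_m.
  have := Rle_trans _ _ _ (Rabs_pos _) d1_m; nra.
have [c [g_mvt c01]] : exists c, g 1 - g 0 = Derive g c * (1 - 0) /\ 0 < c < 1.
  apply: MVT_cor2 => [|c c01]; first lra.
  have [L gL _] := g_der c c01.
  by rewrite (is_derive_unique g c L) //; apply/is_derive_Reals.
have [L gL le_L] := g_der c (conj (Rlt_le _ _ (proj1 c01)) (Rlt_le _ _ (proj2 c01))).
rewrite (is_derive_unique g c L) in g_mvt; last exact/is_derive_Reals.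
move: g_mvt; rewrite /g !Rmult_1_l !Rmult_0_l !Rplus_0_r !Rplus_minus; lra.
Qed.

Lemma Ftot_sub_le n p (F : 'I_p -> R -> R -> R) (s1 s2 : 'I_p -> 'I_n) (x y : 'I_n -> R) e :
  (forall j, F j (x (s1 j)) (x (s2 j)) - F j (y (s1 j)) (y (s2 j)) <= e) ->
  Ftot F s1 s2 x - Ftot F s1 s2 y <= INR p * e.
Proof.
move=> le_e; rewrite /Ftot !Rsum_enum.
have : \big[Rplus/0]_j F j (x (s1 j)) (x (s2 j)) <=
       \big[Rplus/0]_j (F j (y (s1 j)) (y (s2 j)) + e).
  by apply: big_Rle => j _; have := le_e j; lra.
rewrite big_split big_const_Rplus /=; lra.
Qed.

Unset Implicit Arguments.

Theorem theorem1 (n p : nat) (LB UB : 'I_n -> R) (F : 'I_p -> R -> R -> R)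
  (s1 s2 : 'I_p -> 'I_n) (par : 'I_n -> option 'I_n) (m delta : R)
  (K : 'I_n -> nat) (xh : 'I_n -> R) :
  (forall i, (LB i <= UB i)) ->
  (forall j, s1 j <> s2 j) ->
  is_pseudo_tree s1 s2 par ->
  (0 < m) ->
  (forall i, UB i = (LB i + INR (K i) * m)) ->
  (forall j u v, (LB (s1 j) <= u <= UB (s1 j)) -> (LB (s2 j) <= v <= UB (s2 j)) ->
     exists lu lv, differentiable_pt_lim (F j) u v lu lv /\
                   (Rabs lu + Rabs lv <= delta)) ->
  dpop_solution F s1 s2 par (grid LB K m) xh ->
  forall x : 'I_n -> R, (forall i, (LB i <= x i <= UB i)) ->
  (Ftot F s1 s2 xh >= Ftot F s1 s2 x - INR p * m * delta).
Proof.
move=> _ _ pseudo_tree m_gt0 UB_grid grad_bound sol x x_box.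
have x_box' i : LB i <= x i <= LB i + INR (K i) * m by rewrite -UB_grid.
have [y y_grid] := grid_neighbour m_gt0 x_box'.
have y_box i : LB i <= y i <= UB i by rewrite UB_grid; case: (y_grid i).
have x_y i : Rabs (x i - y i) <= m by case: (y_grid i).
have rounding_loss : Ftot F s1 s2 x - Ftot F s1 s2 y <= INR p * (delta * m).
  apply: Ftot_sub_le => j.
  exact: sub_le_of_grad_bound (grad_bound j) (x_box _) (x_box _) (y_box _) (y_box _) (x_y _) (x_y _).
have y_dom i : List.In (y i) (grid LB K m i) by case: (y_grid i).
have := pseudo_tree_dpop_optimal pseudo_tree sol y_dom; lra.
Qed.
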